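(* For a coloured integer $k_x$, let $G_{k_x}(a,b,q)=\sum a^{u}b^{v}q^{n}$, the sum running over all admissible coloured partitions (including the empty one) whose largest part $\lambda_1$ satisfies $\lambda_1\le k_x$ in the total order of coloured integers, where $n,u,v$ are the size and the two weights of the partition. Writing $G_{k_x}$ for $G_{k_x}(a,b,q)$, for all integers $k\ge 1$ the following identities of formal power series hold: \begin{align*} G_{(2k+1)_{ab}}&=G_{(2k)_{b}}+abq^{2k+1} G_{(2k-1)_{a}},\\ G_{(2k+1)_a}&=G_{(2k+1)_{ab}}+aq^{2k+1} G_{(2k)_{ab}},\\ G_{(2k+1)_{b^2}}&=G_{(2k+1)_{a}}+b^2q^{2k+1}G_{(2k-1)_{a}},\\ G_{(2k+1)_{b}}&=G_{(2k+1)_{b^2}}+bq^{2k+1}G_{(2k)_{a}},\\ G_{(2k+2)_{ab}}&= G_{(2k+1)_{b}}+abq^{2k+2}G_{(2k)_{a}}+ab^2q^{4k+2}G_{(2k-1)_{a}},\\ G_{(2k+2)_{a}}&= G_{(2k+2)_{ab}}+ aq^{2k+2} G_{(2k)_{a}}+ abq^{4k+2}G_{(2k-1)_{a}},\\ G_{(2k+3)_{a^2}}&=G_{(2k+2)_{a}}+a^2q^{2k+3}G_{(2k)_{a}}+a^2bq^{4k+3}G_{(2k-1)_{a}},\\ G_{(2k+2)_{b}}&=G_{(2k+3)_{a^2}}+bq^{2k+2}G_{(2k+1)_{a}}. \end{align*}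
   Context: Coloured integers: every positive integer $k$ occurs in the three colours $a$, $b$, $ab$ (written $k_a$, $k_b$, $k_{ab}$). In addition, odd positive integers occur in the colours $a^2$ and $b^2$: $k_{b^2}$ for every odd $k\ge 1$ and $k_{a^2}$ for every odd $k \geq 3$. The integer value of $k_x$ is $k$ and its colour is $x$. These coloured integers are totally ordered by $$1_{ab} < 1_a < 1_{b^2} <1_{b} <2_{ab} < 2_a <3_{a^2} < 2_{b} <3_{ab} < 3_a < 3_{b^2} <3_b <4_{ab}<4_a<5_{a^2}<4_b<5_{ab}<\cdots,$$ that is, for every odd $m\ge1$: $m_{ab}<m_a<m_{b^2}<m_b<(m+1)_{ab}<(m+1)_a<(m+2)_{a^2}<(m+1)_b<(m+2)_{ab}$. Difference conditions: for a coloured integer $\lambda$ (the ''upper'' part) of colour $x$ and a coloured integer $\mu$ (the ''lower'' part) of colour $y$, a minimal difference $A(\lambda,\mu)$ is defined as follows, where the row is determined by the colour and the parity of the integer value of $\lambda$, and the entries are listed for $y = a, b, ab, a^2, b^2$ in this order: - $\lambda$ of colour $a$, odd: $2,2,1,2,2$; - $\lambda$ of colour $b^2$: $2,3,2,2,4$; - $\lambda$ of colour $b$, odd: $1,2,1,2,2$; - $\lambda$ of colour $ab$, even: $2,2,2,3,3$; - $\lambda$ of colour $a$, even: $2,2,2,3,3$; - $\lambda$ of colour $a^2$: $3,3,3,4,4$; - $\lambda$ of colour $b$, even: $1,2,1,1,3$; - $\lambda$ of colour $ab$, odd: $2,3,2,2,3$. An admissible coloured partition is a finite (possibly empty) sequence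 $\lambda_1,\dots,\lambda_s$ of coloured integers, none of which equals $1_{ab}$ or $1_{b^2}$, such that for every $1\le i<s$ the integer values satisfy $\lambda_i-\lambda_{i+1}\ge A(\lambda_i,\lambda_{i+1})$. Its size $n$ is the sum of the integer values of its parts. Its weight $u$ is the number of parts of colour $a$ or $ab$ plus twice the number of parts of colour $a^2$; its weight $v$ is the number of parts of colour $b$ or $ab$ plus twice the number of parts of colour $b^2$. *)

From mathcomp Require Import all_boot.
Set Implicit Arguments. Unset Strict Implicit. Unset Printing Implicit Defensive.

Inductive colour := Ca | Cb | Cab | Ca2 | Cb2.

Definition colours : seq colour := [:: Ca; Cb; Cab; Ca2; Cb2].

Definition cint := (nat * colour)%type.

Definition valid_cint (c : cint) : bool :=
  let: (k, x) := c in
  match x with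
  | Ca | Cb | Cab => 0 < k
  | Cb2 => odd k
  | Ca2 => odd k && (3 <= k)
  end.

(** Position in the total order
    1_ab < 1_a < 1_b2 < 1_b < 2_ab < 2_a < 3_a2 < 2_b < 3_ab < ...
    (meaningful on valid coloured integers only). *)
Definition crank (c : cint) : nat :=
  let: (k, x) := c in
  let j := k./2 in
  if odd k then
    match x with
    | Cab => 8 * j | Ca => 8 * j + 1 | Cb2 => 8 * j + 2 | Cb => 8 * j + 3
    | Ca2 => 8 * j - 2
    end
  else
    match x with
    | Cab => 8 * j - 4 | Ca => 8 * j - 3 | Cb => 8 * j - 1
    | _ => 0
    end.

Definition cle (c d : cint) : bool := crank c <= crank d.

Definition pick5 (y : colour) (ea eb eab ea2 eb2 : nat) : nat :=
  match y with Ca => ea | Cb => eb | Cab => eab | Ca2 => ea2 | Cb2 => eb2 end.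

Definition Adiff (l m : cint) : nat :=
  let: (k, x) := l in
  let y := m.2 in
  match x, odd k with
  | Ca, true   => pick5 y 2 2 1 2 2
  | Cb2, _     => pick5 y 2 3 2 2 4
  | Cb, true   => pick5 y 1 2 1 2 2
  | Cab, false => pick5 y 2 2 2 3 3
  | Ca, false  => pick5 y 2 2 2 3 3
  | Ca2, _     => pick5 y 3 3 3 4 4
  | Cb, false  => pick5 y 1 2 1 1 3
  | Cab, true  => pick5 y 2 3 2 2 3
  end.

Definition is_1ab (c : cint) : bool :=
  match c with (1, Cab) => true | _ => false end.
Definition is_1b2 (c : cint) : bool :=
  match c with (1, Cb2) => true | _ => false end.

Fixpoint diff_ok (p : seq cint) : bool :=
  match p with
  | l :: ((m :: _) as p') => (m.1 + Adiff l m <= l.1) && diff_ok p'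
  | _ => true
  end.

Definition admissible (p : seq cint) : bool :=
  all valid_cint p && all (fun c => ~~ is_1ab c && ~~ is_1b2 c) p && diff_ok p.

Definition psize (p : seq cint) : nat := sumn (map fst p).

Definition wt_u (c : cint) : nat :=
  match c.2 with Ca | Cab => 1 | Ca2 => 2 | _ => 0 end.
Definition wt_v (c : cint) : nat :=
  match c.2 with Cb | Cab => 1 | Cb2 => 2 | _ => 0 end.
Definition pweight_u (p : seq cint) : nat := sumn (map wt_u p).
Definition pweight_v (p : seq cint) : nat := sumn (map wt_v p).

(** The largest (= first) part is <= kx in the coloured order; empty partition allowed. *)
Definition first_le (p : seq cint) (kx : cint) : bool :=
  if p is l :: _ then cle l kx else true.

(** Finite candidate list: every sequence of length <= n whose entries are
    coloured-integer pairs (j, x) with 1 <= j <= n.  Every partition of size n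
    occurs exactly once here. *)
Definition alphabet (n : nat) : seq cint :=
  [seq (j, x) | j <- iota 1 n, x <- colours].

Fixpoint words (A : seq cint) (m : nat) : seq (seq cint) :=
  if m is m'.+1 then [seq x :: w | x <- A, w <- words A m'] else [:: [::]].

Definition cands (n : nat) : seq (seq cint) :=
  flatten [seq words (alphabet n) m | m <- iota 0 n.+1].

(** Formal power series in a, b, q with nat coefficients:
    F u v n = coefficient of a^u b^v q^n. *)
Definition fps := nat -> nat -> nat -> nat.

Definition fps_add (F G : fps) : fps := fun u v n => F u v n + G u v n.

(** Multiplication by the monomial a^i b^j q^l. *)
Definition fps_mon (i j l : nat) (F : fps) : fps :=
  fun u v n => if [&& i <= u, j <= v & l <= n] then F (u - i) (v - j) (n - l) else 0.

Definition Gser (kx : cint) : fps :=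
  fun u v n =>
    count (fun p => [&& admissible p, psize p == n, pweight_u p == u,
                        pweight_v p == v & first_le p kx]) (cands n).

(* If K1 is the immediate successor of K0 in the coloured order, then G_{K1} - G_{K0}
   counts the admissible partitions whose largest part is exactly K1.  Deleting that
   part is a bijection onto the admissible partitions whose largest part m satisfies
   K1 - m >= A(K1, m), and it divides the weight by a^u(K1) b^v(K1) q^K1.  Reading off
   the difference table, this condition on m amounts to m <= K' for an explicit K',
   except when K1 is (2k+2)_ab, (2k+2)_a or (2k+3)_a2: there m may moreover be (2k)_b,
   which lies above (2k)_a, and deleting (2k)_b in turn leaves the partitions with
   largest part at most (2k-1)_a. *)

From mathcomp Require Import all_boot zify.
From Stdlib Require Import FunctionalExtensionality.
From HB Require Import structures.

Set Implicit Arguments.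
Unset Strict Implicit.
Unset Printing Implicit Defensive.

Definition colour_eqb (x y : colour) : bool :=
  match x, y with
  | Ca, Ca | Cb, Cb | Cab, Cab | Ca2, Ca2 | Cb2, Cb2 => true
  | _, _ => false
  end.

Lemma colour_eqP : Equality.axiom colour_eqb.
Proof. by case; case; constructor. Qed.

HB.instance Definition _ := hasDecEq.Build colour colour_eqP.

Lemma count_uniq_mem (T : eqType) (P : pred T) (s1 s2 : seq T) :
  uniq s1 -> uniq s2 -> {in P, s1 =i s2} -> count P s1 = count P s2.
Proof.
move=> u1 u2 eq12; rewrite -!size_filter; apply: perm_size.
apply: uniq_perm; rewrite ?filter_uniq // => x; rewrite !mem_filter.
by case Px: (P x) => //=; apply: eq12.
Qed.

Lemma fps_ext (F G : fps) : (forall u v n, F u v n = G u v n) -> F = G.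
Proof.
move=> FG; do 3 (apply: functional_extensionality => ?); exact: FG.
Qed.

Lemma fps_mon_add i j l F G :
  fps_mon i j l (fps_add F G) = fps_add (fps_mon i j l F) (fps_mon i j l G).
Proof. by apply: fps_ext => u v n; rewrite /fps_mon /fps_add; case: ifP. Qed.

Lemma fps_mon_mon i j l i' j' l' F :
  fps_mon i j l (fps_mon i' j' l' F) = fps_mon (i + i') (j + j') (l + l') F.
Proof.
apply: fps_ext => u v n; rewrite /fps_mon !subnDA.
case: (leqP i u) => hu; case: (leqP j v) => hv; case: (leqP l n) => hn /=;
  first by rewrite !leq_subRL.
all: by case: ifP => // /and3P [? ? ?]; lia.
Qed.

Lemma words_uniq (A : seq cint) m : uniq A -> uniq (words A m).
Proof.
move=> uA; elim: m => [|m IH] //=.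
by apply: allpairs_uniq => // [[x w]] [y w'] _ _ /= [-> ->].
Qed.

Lemma size_words (A : seq cint) m w : w \in words A m -> size w = m.
Proof.
elim: m w => [|m IH] w /=; first by rewrite inE => /eqP ->.
by case/allpairsP => [[x w']] [_ /= /IH <- ->].
Qed.

Lemma mem_words (A : seq cint) w : all (mem A) w -> w \in words A (size w).
Proof.
elim: w => [|x w IH] //= /andP [xA wA].
by apply: (allpairs_f (fun x w => x :: w)) => //; apply: IH.
Qed.

Lemma alphabet_uniq n : uniq (alphabet n).
Proof.
apply: allpairs_uniq; rewrite ?iota_uniq //.
by move=> [j x] [j' x'] _ _ /= [-> ->].
Qed.

Lemma cands_uniq n : uniq (cands n).
Proof.
rewrite /cands; elim: (iota 0 n.+1) (iota_uniq 0 n.+1) => [|m s IH] //= /andP [ms us].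
rewrite cat_uniq words_uniq ?alphabet_uniq ?IH //= andbT.
apply/hasPn => w /flatten_mapP [m' m's] /size_words wm.
by apply: contra ms => /size_words; rewrite wm => <-.
Qed.

Lemma part_le_psize p c : c \in p -> c.1 <= psize p.
Proof.
rewrite /psize; elim: p => [|d p IH] //=.
rewrite inE => /predU1P [-> | /IH]; first exact: leq_addr.
by move/leq_trans; apply; apply: leq_addl.
Qed.

Lemma size_le_psize p : all (fun c => 0 < c.1) p -> size p <= psize p.
Proof. by rewrite /psize; elim: p => [|c p IH] //= /andP [c0 /IH]; lia. Qed.

Lemma in_cands p : all (fun c => 0 < c.1) p -> p \in cands (psize p).
Proof.
move=> p_pos; apply/flatten_mapP; exists (size p).
  by rewrite mem_iota ltnS size_le_psize.
apply/mem_words/allP => -[j x] cp; have /= j0 := allP p_pos _ cp.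
have /= jn := part_le_psize cp.
by apply: (allpairs_f (fun j x => (j, x))); [rewrite mem_iota; lia | case: (x)].
Qed.

Definition is_part (c : cint) : bool := [&& valid_cint c, ~~ is_1ab c & ~~ is_1b2 c].

Definition fits (l m : cint) : bool := m.1 + Adiff l m <= l.1.

Definition fits_head (l : cint) (p : seq cint) : bool :=
  if p is m :: _ then fits l m else true.

Lemma admissible_cons l p :
  admissible (l :: p) = [&& is_part l, fits_head l p & admissible p].
Proof.
rewrite /admissible /is_part /=; case: p => [|m p] /=; first by rewrite !andbT.
by rewrite /fits; case: (valid_cint l); case: (~~ is_1ab l); case: (~~ is_1b2 l);
  case: (_ <= _); rewrite /= ?andbF.
Qed.

Lemma admissible_pos p : admissible p -> all (fun c => 0 < c.1) p.
Proof.
case/andP => /andP [/allP valid_p _] _; apply/allP => -[[|j] x] /valid_p //=.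
by case: x => //; rewrite andbF.
Qed.

Definition Gen (P : pred (seq cint)) : fps := fun u v n =>
  count (fun p => [&& admissible p, psize p == n, pweight_u p == u,
                      pweight_v p == v & P p]) (cands n).

Lemma GserE kx : Gser kx = Gen (first_le ^~ kx).
Proof. by []. Qed.

Lemma Gen_ext P Q : (forall p, admissible p -> P p = Q p) -> Gen P = Gen Q.
Proof.
move=> PQ; apply: fps_ext => u v n; apply: eq_count => p.
by case adm: (admissible p) => //=; rewrite PQ.
Qed.

Lemma Gen_or P Q : (forall p, admissible p -> ~~ (P p && Q p)) ->
  Gen (fun p => P p || Q p) = fps_add (Gen P) (Gen Q).
Proof.
move=> PQ; apply: fps_ext => u v n; rewrite /fps_add /Gen -count_predUI.
rewrite (@eq_count _ (predI _ _) pred0) ?count_pred0 ?addn0 => [|p /=].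
  by apply: eq_count => p /=; case: (admissible p); do !case: (_ == _).
case adm: (admissible p) => //=; move: (PQ p adm).
by case: (P p); case: (Q p); rewrite /= ?andbF.
Qed.

Lemma Gen_head l : is_part l ->
  Gen (fun p => ohead p == Some l) = fps_mon (wt_u l) (wt_v l) l.1 (Gen (fits_head l)).
Proof.
move=> part_l; apply: fps_ext => u v n; rewrite /fps_mon /Gen.
have cons_inj : injective (cons l) by move=> p q [].
case: ifP => [/and3P [hu hv hn] | too_small]; last first.
  rewrite (@eq_count _ _ pred0) ?count_pred0 // => p /=.
  apply/negP => /and5P [_ /eqP psize_p /eqP wu /eqP wv].
  case: p psize_p wu wv => [|c p] //= psize_p wu wv /eqP [c_l].
  move: too_small; rewrite -psize_p -wu -wv c_l.
  by rewrite /psize /pweight_u /pweight_v /= !leq_addr.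
set L := fun p => [&& _, _, _, _ & _].
transitivity (count L [seq l :: p | p <- cands (n - l.1)]).
  apply: count_uniq_mem; rewrite ?map_inj_uniq ?cands_uniq // => p.
  rewrite [p \in L]inE => /and5P [adm /eqP <- _ _ head_l].
  have [q p_lq] : exists q, p = l :: q.
    by case: p adm head_l => [|c q] // _ /eqP [->]; exists q.
  rewrite {head_l}p_lq in adm *.
  rewrite in_cands ?admissible_pos // (mem_map cons_inj) /psize /= addKn in_cands //.
  by move: adm; rewrite admissible_cons => /and3P [_ _ /admissible_pos].
have add_eq a b m : a <= m -> (a + b == m) = (b == m - a) by move=> ?; apply/eqP/eqP; lia.
rewrite count_map; apply: eq_count => p; rewrite /L /= admissible_cons part_l eqxx.
rewrite /psize /pweight_u /pweight_v /= !add_eq // andbT.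
by case: (fits_head l p); rewrite /= ?andbT ?andbF.
Qed.

Ltac case_odd :=
  repeat match goal with |- context [odd ?x] => let E := fresh in case E : (odd x) end.

Lemma crank_inj : {in valid_cint &, injective crank}.
Proof.
move=> [j x] [j' y]; rewrite !unfold_in.
by case: x; case: y; rewrite /valid_cint /crank; case_odd => /= *;
  first [exfalso; lia | congr pair; lia].
Qed.

Lemma cle_succ c K0 K1 : valid_cint c -> valid_cint K1 -> crank K1 = (crank K0).+1 ->
  cle c K1 = cle c K0 || (c == K1).
Proof.
move=> valid_c valid_K1 K1_succ; rewrite /cle K1_succ leq_eqVlt ltnS orbC.
by congr orb; apply/eqP/eqP => [|-> //]; rewrite -K1_succ; exact: crank_inj.
Qed.

Lemma Gser_succ K0 K1 : is_part K1 -> crank K1 = (crank K0).+1 ->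
  Gser K1 = fps_add (Gser K0) (fps_mon (wt_u K1) (wt_v K1) K1.1 (Gen (fits_head K1))).
Proof.
move=> part_K1 K1_succ; rewrite -Gen_head // !GserE -Gen_or => [|[|c p] _] //=.
  apply: Gen_ext => -[|c p] //; rewrite admissible_cons => /and3P [/and3P [valid_c _ _] _ _].
  by apply: cle_succ => //; case/and3P: part_K1.
apply/negP => /andP [le_c_K0 /eqP [c_K1]].
by move: le_c_K0; rewrite c_K1 /cle K1_succ ltnn.
Qed.

Lemma Gen_fits_head_le K K' : (forall m, is_part m -> fits K m = cle m K') ->
  Gen (fits_head K) = Gser K'.
Proof.
move=> fitsE; rewrite GserE; apply: Gen_ext => -[|m p] //.
by rewrite admissible_cons => /and3P [/fitsE].
Qed.

Lemma Gen_fits_head_le_or K K' m0 :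
  (forall m, is_part m -> fits K m = cle m K' || (m == m0)) ->
  ~~ cle m0 K' -> is_part m0 ->
  Gen (fits_head K) =
    fps_add (Gser K') (fps_mon (wt_u m0) (wt_v m0) m0.1 (Gen (fits_head m0))).
Proof.
move=> fitsE m0_gt part_m0; rewrite -Gen_head // GserE -Gen_or => [|[|m p] _] //=.
  by apply: Gen_ext => -[|m p] //; rewrite admissible_cons => /and3P [/fitsE].
by apply/negP => /andP [le_m /eqP [m_m0]]; rewrite -m_m0 le_m in m0_gt.
Qed.

Lemma Gser_succ_le K0 K1 K' :
  is_part K1 -> crank K1 = (crank K0).+1 ->
  (forall m, is_part m -> fits K1 m = cle m K') ->
  Gser K1 = fps_add (Gser K0) (fps_mon (wt_u K1) (wt_v K1) K1.1 (Gser K')).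
Proof.
by move=> part_K1 K1_succ fitsE; rewrite (Gser_succ part_K1 K1_succ) (Gen_fits_head_le fitsE).
Qed.

Lemma Gser_succ_le_or K0 K1 K' m0 K'' i j l :
  is_part K1 -> crank K1 = (crank K0).+1 ->
  (forall m, is_part m -> fits K1 m = cle m K' || (m == m0)) ->
  ~~ cle m0 K' -> is_part m0 ->
  (forall m, is_part m -> fits m0 m = cle m K'') ->
  i = wt_u K1 + wt_u m0 -> j = wt_v K1 + wt_v m0 -> l = K1.1 + m0.1 ->
  Gser K1 = fps_add (Gser K0)
    (fps_add (fps_mon (wt_u K1) (wt_v K1) K1.1 (Gser K')) (fps_mon i j l (Gser K''))).
Proof.
move=> part_K1 K1_succ fitsE m0_gt part_m0 fits_m0E -> -> ->.
rewrite (Gser_succ part_K1 K1_succ) (Gen_fits_head_le_or fitsE m0_gt part_m0).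
by rewrite (Gen_fits_head_le fits_m0E) fps_mon_add fps_mon_mon.
Qed.

Lemma is_partE c : is_part c =
  [&& valid_cint c, ~~ ((c.2 == Cab) && (c.1 == 1)) & ~~ ((c.2 == Cb2) && (c.1 == 1))].
Proof. by case: c => [[|[|j]] []]. Qed.

Ltac coloured_lia :=
  rewrite ?is_partE; unfold fits, cle, valid_cint, crank, Adiff, pick5, wt_u, wt_v;
  rewrite ?xpair_eqE ?eqxx /=; case_odd; rewrite /= => *; try apply/idP/idP; lia.

Ltac coloured_side := first [by move=> [j []]; coloured_lia | coloured_lia].


Theorem lemma3p2 (k : nat) (hk : 1 <= k) :
  (Gser (k.*2.+1, Cab) =
        fps_add (Gser (k.*2, Cb)) (fps_mon 1 1 k.*2.+1 (Gser (k.*2.-1, Ca)))) /\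
      (Gser (k.*2.+1, Ca) =
        fps_add (Gser (k.*2.+1, Cab)) (fps_mon 1 0 k.*2.+1 (Gser (k.*2, Cab)))) /\
      (Gser (k.*2.+1, Cb2) =
        fps_add (Gser (k.*2.+1, Ca)) (fps_mon 0 2 k.*2.+1 (Gser (k.*2.-1, Ca)))) /\
      (Gser (k.*2.+1, Cb) =
        fps_add (Gser (k.*2.+1, Cb2)) (fps_mon 0 1 k.*2.+1 (Gser (k.*2, Ca)))) /\
      (Gser (k.*2.+2, Cab) =
        fps_add (Gser (k.*2.+1, Cb))
          (fps_add (fps_mon 1 1 k.*2.+2 (Gser (k.*2, Ca)))
                   (fps_mon 1 2 (4 * k + 2) (Gser (k.*2.-1, Ca))))) /\
      (Gser (k.*2.+2, Ca) =
        fps_add (Gser (k.*2.+2, Cab))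
          (fps_add (fps_mon 1 0 k.*2.+2 (Gser (k.*2, Ca)))
                   (fps_mon 1 1 (4 * k + 2) (Gser (k.*2.-1, Ca))))) /\
      (Gser (k.*2.+3, Ca2) =
        fps_add (Gser (k.*2.+2, Ca))
          (fps_add (fps_mon 2 0 k.*2.+3 (Gser (k.*2, Ca)))
                   (fps_mon 2 1 (4 * k + 3) (Gser (k.*2.-1, Ca))))) /\
      (Gser (k.*2.+2, Cb) =
        fps_add (Gser (k.*2.+3, Ca2)) (fps_mon 0 1 k.*2.+2 (Gser (k.*2.+1, Ca)))).
Proof.
split; first by apply: Gser_succ_le; coloured_side.
split; first by apply: Gser_succ_le; coloured_side.
split; first by apply: Gser_succ_le; coloured_side.
split; first by apply: Gser_succ_le; coloured_side.
split; first by apply: (Gser_succ_le_or (m0 := (k.*2, Cb))); coloured_side.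
split; first by apply: (Gser_succ_le_or (m0 := (k.*2, Cb))); coloured_side.
split; first by apply: (Gser_succ_le_or (m0 := (k.*2, Cb))); coloured_side.
by apply: Gser_succ_le; coloured_side.
Qed.
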